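(* Let $K$ be an algebraically closed field, complete with respect to a non-trivial non-archimedean absolute value $|\cdot|_v$, with $\mathrm{char}(K)=0$ or $\mathrm{char}(K)>d$, and let $f\in\mathrm{Poly}_{N,d}(K)$. Then: (1) for every $D\in\mathrm{Div}^*_K(\mathbb{P}^N)$ the limit $G_{f,v}(D)=\lim_{n\to\infty}d^{-n}\lambda_v(f^n_*(D))$ exists; (2) $G_{f,v}(f_*(D))=dG_{f,v}(D)$ for all $D\in\mathrm{Div}^*_K(\mathbb{P}^N)$; (3) if $D\in\mathrm{Div}^*_K(\mathbb{P}^N)$ is preperiodic for $f$, then $G_{f,v}(D)=0$; (4) if $\lambda_v(D)>\mathcal{B}_v(f)$, then $G_{f,v}(D)=\lambda_v(D)$; (5) for every $D\in\mathrm{Div}^*_K(\mathbb{P}^N)$, $|G_{f,v}(D)-\lambda_v(D)|\le 2\mathcal{B}_v(f)$.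
   Context: $N\ge1$, $d\ge2$. $\mathrm{Ind}^*(N,d)$: multi-indices $I=(I_0,\dots,I_N)$ with $\sum I_j=d$, $0<I_N<d$. $\mathrm{Poly}_{N,d}(K)$: tuples $(a_{i,I})_{0\le i<N,I\in\mathrm{Ind}^*(N,d)}$ in $K$, giving $f=[f_0:\cdots:f_N]$ with $f_i=x_i^d+\sum_Ia_{i,I}\mathbf{x}^I$ ($i<N$), $f_N=x_N^d$; $\mathcal{B}_v(f)=\log^+\max|a_{i,I}|_v^{1/I_N}$. $\mathrm{Div}^*_K(\mathbb{P}^N)$: effective divisors over $K$ defined by a form $F_D$ with $F_D(x_0,\dots,x_{N-1},0)=\prod_{i<N}x_i^{e_i}$; $\lambda_v(D)=\log^+\sup_{|\beta_0|_v=\cdots=|\beta_{N-1}|_v=1}\max\{|\beta_N|_v^{-1}:F_D(\beta)=0\}$. $f_*(D)$: push-forward divisor, defined by the Macaulay-resultant form $\mathrm{Res}(F_D,f)$, $\mathrm{Res}(F,f)(y_0,\dots,y_{N-1},1)=\mathrm{Res}_{x}(F,y_0x_N^d-f_0,\dots,y_{N-1}x_N^d-f_{N-1})$; its points are the images of points of $D$; $f(D)$ denotes its radical (reduced divisor with the same support). $D$ is preperiodic for $f$ if the sequence $f^n(D)$, $n\ge0$, takes only finitely many values. *)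

From HB Require Import structures.
From mathcomp Require Import all_boot all_order all_algebra.
From mathcomp Require Import all_classical all_reals all_analysis.
From mathcomp Require mpoly.
Set Implicit Arguments. Unset Strict Implicit. Unset Printing Implicit Defensive.
Import Order.TTheory GRing.Theory Num.Theory.
Import numFieldNormedType.Exports.
Local Open Scope ring_scope.
Local Open Scope classical_set_scope.

Section Defs.
Variables (R : realType) (K : fieldType).

Definition nonarch_absval (absv : K -> R) : Prop :=
  [/\ forall x, 0 <= absv x,
      forall x, absv x = 0 <-> x = 0,
      forall x y, absv (x * y) = absv x * absv y &
      forall x y, absv (x + y) <= Num.max (absv x) (absv y)].

Definition nontrivial_absval (absv : K -> R) : Prop :=
  exists x, absv x != 0 /\ absv x != 1.

Definition complete_absval (absv : K -> R) : Prop :=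
  forall u : nat -> K,
    (forall e : R, 0 < e -> exists M : nat, forall m n : nat,
        (M <= m)%N -> (M <= n)%N -> absv (u m - u n) < e) ->
    exists l : K, forall e : R, 0 < e -> exists M : nat, forall n : nat,
        (M <= n)%N -> absv (u n - l) < e.

Definition logp (x : R) : R := if x <= 1 then 0 else ln x.

Definition mindex (N d : nat) := {ffun 'I_N.+1 -> 'I_d.+1}.

Definition Ind_star (N d : nat) : pred (mindex N d) :=
  [pred I : mindex N d | (\sum_(j < N.+1) (I j : nat) == d)%N
                        && (0 < I ord_max < d)%N].
Arguments Ind_star : clear implicits.

(* f = [f_0 : ... : f_N] attached to the coefficient tuple a = (a_{i,I}),
   i < N, I in Ind^*(N,d) (values of a outside Ind^*(N,d) are ignored);
   coordinates are indexed by 'I_N.+1, the last one (ord_max) being x_N. *)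
Definition polyf (N d : nat) (a : 'I_N -> mindex N d -> K)
    (x : 'I_N.+1 -> K) : 'I_N.+1 -> K :=
  fun j => if unlift ord_max j is Some i then
             x j ^+ d + \sum_(I in Ind_star N d)
                           a i I * \prod_(k < N.+1) x k ^+ (I k : nat)
           else x j ^+ d.

Definition Bv (absv : K -> R) (N d : nat) (a : 'I_N -> mindex N d -> K) : R :=
  logp (\big[Num.max/0]_(i < N) \big[Num.max/0]_(I in Ind_star N d)
          (absv (a i I) `^ ((I ord_max : nat)%:R)^-1)).

(* Div^*_K(P^N): forms F (homogeneous polynomials in x_0..x_N) with
   F(x_0,...,x_{N-1},0) = prod_{i<N} x_i^{e_i} *)
Definition Div_star (N : nat) (F : mpoly.mpoly N.+1 K) : Prop :=
  (exists e : nat, all [pred m | mpoly.mdeg m == e] (mpoly.msupp F)) /\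
  exists ex : 'I_N -> nat, forall x : 'I_N.+1 -> K, x ord_max = 0 ->
     mpoly.meval x F = \prod_(i < N) x (widen_ord (leqnSn N) i) ^+ ex i.

(* support of a divisor, as a cone in K^{N+1} *)
Definition zeroset (N : nat) (F : mpoly.mpoly N.+1 K) : set ('I_N.+1 -> K) :=
  [set x | mpoly.meval x F = 0].

(* support of the push-forward f_*(D): the image of the support of D *)
Definition push (N d : nat) (a : 'I_N -> mindex N d -> K)
    (Z : set ('I_N.+1 -> K)) : set ('I_N.+1 -> K) :=
  [set polyf a x | x in Z].

(* lambda_v of a divisor with support Z:
   log^+ sup { |b_N|^{-1} : b in Z, |b_0| = ... = |b_{N-1}| = 1 }
   (= sup of the log^+ values, and 0 if there is no such b). *)
Definition lambdav (absv : K -> R) (N : nat) (Z : set ('I_N.+1 -> K)) : R :=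
  sup ([set 0] `|`
       [set logp ((absv (b ord_max))^-1) | b in
          [set b | Z b /\ forall i : 'I_N.+1, i != ord_max -> absv (b i) = 1]]).

Definition Gseq (absv : K -> R) (N d : nat) (a : 'I_N -> mindex N d -> K)
    (Z : set ('I_N.+1 -> K)) : nat -> R :=
  fun n => lambdav absv (iter n (push a) Z) / (d ^ n)%:R.

Definition Gv (absv : K -> R) (N d : nat) (a : 'I_N -> mindex N d -> K)
    (Z : set ('I_N.+1 -> K)) : R :=
  limn (Gseq absv a Z).

Definition preperiodic (N d : nat) (a : 'I_N -> mindex N d -> K)
    (Z : set ('I_N.+1 -> K)) : Prop :=
  finite_set (range (fun n : nat => iter n (push a) Z)).

End Defs.

From HB Require Import structures.
From mathcomp Require Import all_boot all_order all_algebra.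
From mathcomp Require Import all_classical all_reals all_analysis.
From mathcomp Require mpoly.
From mathcomp Require Import ring lra.
Set Implicit Arguments. Unset Strict Implicit. Unset Printing Implicit Defensive.
Import Order.TTheory GRing.Theory Num.Theory.
Import numFieldNormedType.Exports.
Local Open Scope ring_scope.
Local Open Scope classical_set_scope.

(* Write [lam n] for [lambda_v(f^n_*(D))] and [B] for [B_v(f)].  At a point [x]
   with [|x_0| = ... = |x_{N-1}| = 1] the coordinates [x_j^d + sum a_{j,I} x^I] of
   [f(x)] are dominated by [x_j^d] as soon as [|x_N|] is small compared with the
   coefficients, and the last coordinate is [x_N^d].  By the ultrametric
   inequality this gives [lam (n+1) <= d * max (lam n) B], with equality
   [lam (n+1) = d * lam n] once [lam n > B].  So [d^-n lam n] is eventually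
   constant if some [lam n] exceeds [B] and tends to [0] otherwise; the five
   claims are statements about such sequences. *)

Definition renorm (R : realType) (d : nat) (lam : nat -> R) (n : nat) : R :=
  lam n / (d ^ n)%:R.

Section Renormalization.
Variables (R : realType) (d : nat) (B : R) (lam : nat -> R).
Hypothesis d_ge2 : (2 <= d)%N.
Hypothesis B_ge0 : 0 <= B.
Hypothesis lam_ge0 : forall n, 0 <= lam n.
Hypothesis lamS_le : forall n, lam n.+1 <= d%:R * Num.max (lam n) B.
Hypothesis lamS_ge : forall n, B < lam n -> d%:R * lam n <= lam n.+1.

Let d_gt0 : (0 < d)%N. Proof. exact: leq_trans d_ge2. Qed.
Let dn_gt0 n : (0 : R) < (d ^ n)%:R. Proof. by rewrite ltr0n expn_gt0 d_gt0. Qed.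
Let dn_ge1 n : (1 : R) <= (d ^ n)%:R. Proof. by rewrite ler1n expn_gt0 d_gt0. Qed.

Lemma lamS_eq n : B < lam n -> lam n.+1 = d%:R * lam n.
Proof.
move=> Blt; apply/eqP; rewrite eq_le lamS_ge // andbT.
by have := lamS_le n; rewrite (max_idPl (ltW Blt)).
Qed.

Lemma lamD_eq n k : B < lam n -> lam (n + k)%N = (d ^ k)%:R * lam n.
Proof.
move=> Blt; elim: k => [|k IH]; first by rewrite addn0 expn0 mul1r.
have lam_gt0 : 0 < lam n by apply: le_lt_trans Blt.
rewrite addnS lamS_eq IH ?expnS ?natrM ?mulrA //.
by apply: (lt_le_trans Blt); rewrite ler_peMl // ltW.
Qed.

Lemma lam_le n : lam n <= (d ^ n)%:R * Num.max (lam 0) B.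
Proof.
elim: n => [|n IH]; first by rewrite expn0 mul1r le_max lexx.
apply: (le_trans (lamS_le n)); rewrite expnS natrM -mulrA ler_pM2l ?ltr0n //.
have B_le_max : B <= Num.max (lam 0) B by rewrite le_max lexx orbT.
rewrite ge_max IH /=; apply: (le_trans B_le_max).
by rewrite ler_peMl // (le_trans B_ge0).
Qed.

Lemma renorm_ge0 n : 0 <= renorm d lam n.
Proof. by rewrite divr_ge0 // ltW. Qed.

Lemma renorm_le n : renorm d lam n <= Num.max (lam 0) B.
Proof. by rewrite ler_pdivrMr // mulrC lam_le. Qed.

Lemma renorm_cvg_escape n0 : B < lam n0 -> renorm d lam @ \oo --> renorm d lam n0.
Proof.
move=> Blt; apply: cvg_near_cst; exists n0 => // n /= le_n0n.
rewrite /renorm -(subnKC le_n0n) lamD_eq // expnD natrM.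
by rewrite [X in _ / X]mulrC -mulf_div divff ?mul1r // gt_eqF.
Qed.

Lemma renorm_cvg0 : (forall n, lam n <= B) -> renorm d lam @ \oo --> 0.
Proof.
move=> lam_le_B.
apply: (@squeeze_cvgr _ _ _ _ (fun=> 0) (geometric B (d%:R^-1))).
- apply: nearW => n; rewrite renorm_ge0 /= /renorm natrX exprVn.
  by rewrite ler_pM2r ?invr_gt0 ?exprn_gt0 ?ltr0n.
- exact: cvg_cst.
- apply: cvg_geometric; rewrite ger0_norm ?invr_ge0 ?ler0n //.
  by rewrite invf_lt1 ?ltr0n // ltr1n.
Qed.

Lemma cvg_renorm : cvgn (renorm d lam).
Proof.
have [[n0 Blt]|] := pselect (exists n, B < lam n).
  exact: cvgP (renorm_cvg_escape Blt).
move=> never_gt; apply: cvgP (renorm_cvg0 _) => n.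
by rewrite leNgt; apply/negP => Blt; apply: never_gt; exists n.
Qed.

Lemma lim_renorm_ge0 : 0 <= limn (renorm d lam).
Proof. by apply: limr_ge; [exact: cvg_renorm | exact: nearW renorm_ge0]. Qed.

Lemma lim_renorm_le : limn (renorm d lam) <= Num.max (lam 0) B.
Proof. by apply: limr_le; [exact: cvg_renorm | exact: nearW renorm_le]. Qed.

Lemma lim_renorm_escape : B < lam 0 -> limn (renorm d lam) = lam 0.
Proof.
move=> Blt; rewrite (cvg_lim _ (renorm_cvg_escape Blt)) //.
by rewrite /renorm expn0 divr1.
Qed.

Lemma lim_renorm_bounded : (exists M, forall n, lam n <= M) -> limn (renorm d lam) = 0.
Proof.
move=> [M lam_le_M]; apply: cvg_lim => //; apply: renorm_cvg0 => n.
rewrite leNgt; apply/negP => Blt.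
have lam_gt0 : 0 < lam n by apply: le_lt_trans Blt.
have M_ge0 : 0 <= M / lam n by rewrite divr_ge0 // (le_trans (lam_ge0 0)).
pose k := Num.Def.archi_bound (M / lam n).
have := lam_le_M (n + k)%N; rewrite lamD_eq // leNgt => /negP; apply.
rewrite -ltr_pdivrMr //; apply: (lt_le_trans (archi_boundP M_ge0)).
by rewrite ler_nat ltnW // ltn_expl.
Qed.

Lemma lim_renorm_shift :
  limn (renorm d (fun n => lam n.+1)) = d%:R * limn (renorm d lam).
Proof.
have -> : renorm d (fun n => lam n.+1) = (fun n => d%:R * renorm d lam n.+1).
  apply: funext => n; rewrite /renorm expnS natrM; field.
  by rewrite !pnatr_eq0 -!lt0n expn_gt0 d_gt0.
apply: cvg_lim => //; apply: cvgMl_tmp.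
by rewrite (cvg_shiftS (renorm d lam)); exact: cvg_renorm.
Qed.

Lemma lim_renorm_dist : `|limn (renorm d lam) - lam 0| <= 2 * B.
Proof.
have [Blt|lam0_le] := ltP B (lam 0).
  by rewrite lim_renorm_escape // subrr normr0 mulr_ge0.
have := lim_renorm_le; rewrite (max_idPr lam0_le) => lim_le.
have := lim_renorm_ge0; have := lam_ge0 0.
by rewrite ler_norml; lra.
Qed.

End Renormalization.

Section NonArchimedean.
Variables (R : realType) (K : fieldType) (absv : K -> R).
Hypothesis habs : nonarch_absval absv.

Lemma absv_ge0 x : 0 <= absv x. Proof. by case: habs. Qed.
Lemma absv_eq0 x : absv x = 0 <-> x = 0. Proof. by case: habs. Qed.
Lemma absvM x y : absv (x * y) = absv x * absv y. Proof. by case: habs. Qed.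
Lemma absvD_le_max x y : absv (x + y) <= Num.max (absv x) (absv y).
Proof. by case: habs. Qed.

Lemma absv0 : absv 0 = 0. Proof. exact/absv_eq0. Qed.

Lemma absv1 : absv 1 = 1.
Proof.
have absv1_gt0 : 0 < absv 1.
  by rewrite lt_def absv_ge0 andbT; apply/eqP => /absv_eq0/eqP; rewrite oner_eq0.
by apply: (mulfI (lt0r_neq0 absv1_gt0)); rewrite -absvM !mulr1.
Qed.

Lemma absvN x : absv (- x) = absv x.
Proof.
have absvN1 : absv (-1) = 1.
  have := absvM (-1) (-1); rewrite mulrNN mulr1 absv1 => sq1.
  have := absv_ge0 (-1); nra.
by rewrite -mulN1r absvM absvN1 mul1r.
Qed.

Lemma absvX x n : absv (x ^+ n) = absv x ^+ n.
Proof. by elim: n => [|n IH]; rewrite ?expr0 ?absv1 // !exprS absvM IH. Qed.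

Lemma absv_prod (I : Type) (r : seq I) (P : pred I) (F : I -> K) :
  absv (\prod_(i <- r | P i) F i) = \prod_(i <- r | P i) absv (F i).
Proof. exact: (big_morph absv absvM absv1). Qed.

Lemma absv_sum_le (I : Type) (r : seq I) (P : pred I) (F : I -> K) (M : R) :
  0 <= M -> (forall i, P i -> absv (F i) <= M) ->
  absv (\sum_(i <- r | P i) F i) <= M.
Proof.
move=> M_ge0 F_le; apply: (big_ind (fun y => absv y <= M)) => //; first by rewrite absv0.
by move=> x y x_le y_le; apply: le_trans (absvD_le_max x y) _; rewrite ge_max x_le.
Qed.

Lemma absv_sum_lt (I : Type) (r : seq I) (P : pred I) (F : I -> K) (M : R) :
  0 < M -> (forall i, P i -> absv (F i) < M) ->
  absv (\sum_(i <- r | P i) F i) < M.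
Proof.
move=> M_gt0 F_lt; apply: (big_ind (fun y => absv y < M)) => //; first by rewrite absv0.
by move=> x y x_lt y_lt; apply: le_lt_trans (absvD_le_max x y) _; rewrite gt_max x_lt.
Qed.

Lemma absv_sum_mul_le (I : Type) (r : seq I) (c t : I -> K) (s : R) :
  0 <= s -> (forall i, absv (t i) <= s) ->
  absv (\sum_(i <- r) c i * t i) <= (\big[Num.max/0]_(i <- r) absv (c i)) * s.
Proof.
move=> s_ge0 t_le; elim: r => [|i r IH]; first by rewrite !big_nil absv0 mul0r.
rewrite !big_cons; apply: le_trans (absvD_le_max _ _) _; rewrite ge_max absvM.
rewrite ler_pM ?absv_ge0 ?le_max ?lexx //=.
by apply: le_trans IH _; rewrite ler_wpM2r // le_max lexx orbT.
Qed.

Lemma absvDl x y : absv y < absv x -> absv (x + y) = absv x.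
Proof.
move=> y_lt_x; apply/eqP; rewrite eq_le; apply/andP; split.
  by apply: le_trans (absvD_le_max x y) _; rewrite ge_max lexx ltW.
have := absvD_le_max (x + y) (- y); rewrite addrK absvN le_max.
by case/orP=> // x_le_y; rewrite leNgt y_lt_x in x_le_y.
Qed.

End NonArchimedean.

Section LogPlus.
Variable R : realType.

Lemma logpE (x : R) : logp x = ln (Num.max 1 x).
Proof.
rewrite /logp; case: ifPn => [x_le1|]; first by rewrite (max_idPl x_le1) ln1.
by rewrite -ltNge => x_gt1; rewrite (max_idPr (ltW x_gt1)).
Qed.

Lemma logp_ge0 (x : R) : 0 <= logp x.
Proof. by rewrite logpE ln_ge0 // le_max lexx. Qed.

Lemma ler_logp (u v : R) : u <= v -> logp u <= logp v.
Proof.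
move=> u_le_v; have max_gt0 x : (0 : R) < Num.max 1 x.
  by rewrite (lt_le_trans ltr01) // le_max lexx.
by rewrite !logpE ler_ln ?posrE // ge_max !le_max lexx u_le_v orbT.
Qed.

Lemma logpXn (v : R) n : 0 <= v -> logp (v ^+ n) = logp v *+ n.
Proof.
move=> v_ge0; rewrite !logpE.
have [v_le1|v_gt1] := leP v 1.
  by rewrite (max_idPl (exprn_ile1 _ v_ge0 v_le1)) ln1 mul0rn.
rewrite (max_idPr (exprn_ege1 _ (ltW v_gt1))).
by rewrite lnXn // (lt_trans ltr01).
Qed.

End LogPlus.

Lemma widen_ord_neq_max n (i : 'I_n) : widen_ord (leqnSn n) i != ord_max.
Proof. by rewrite -(inj_eq val_inj) /= neq_ltn ltn_ord. Qed.

Section Depth.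
Variables (R : realType) (K : fieldType) (absv : K -> R) (N : nat).
Hypothesis habs : nonarch_absval absv.
Implicit Types (Z : set ('I_N.+1 -> K)) (F : mpoly.mpoly N.+1 K).

Definition normalized (b : 'I_N.+1 -> K) : Prop :=
  forall i : 'I_N.+1, i != ord_max -> absv (b i) = 1.

Definition depth (b : 'I_N.+1 -> K) : R := logp ((absv (b ord_max))^-1).

Definition depth_bounded (Z : set ('I_N.+1 -> K)) : Prop :=
  exists L, forall b, Z b -> normalized b -> depth b <= L.

Lemma lambdavE Z :
  lambdav absv Z = sup ([set 0] `|` depth @` [set b | Z b /\ normalized b]).
Proof. by []. Qed.

Lemma lambdav_ge0 Z : 0 <= lambdav absv Z.
Proof.
rewrite lambdavE; set S := _ `|` _.
have [S_sup|S_nosup] := pselect (has_sup S); last by rewrite sup_out.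
by apply: sup_upper_bound => //; left.
Qed.

Lemma depth_le_lambdav Z b :
  depth_bounded Z -> Z b -> normalized b -> depth b <= lambdav absv Z.
Proof.
move=> [L L_ub] Zb nb; rewrite lambdavE; apply: sup_upper_bound; last by right; exists b.
split; first by exists 0; left.
by exists (Num.max 0 L) => _ [->|[c [Zc nc] <-]]; rewrite le_max ?lexx ?L_ub ?orbT.
Qed.

Lemma lambdav_le Z L : 0 <= L ->
  (forall b, Z b -> normalized b -> depth b <= L) -> lambdav absv Z <= L.
Proof.
move=> L_ge0 L_ub; rewrite lambdavE; apply: ge_sup; first by exists 0; left.
by move=> _ [->|[b [Zb nb] <-]] //; exact: L_ub.
Qed.

Lemma absv_monomial_sub_le (e : 'I_N.+1 -> nat) (b b0 : 'I_N.+1 -> K) :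
  (forall i, i != ord_max -> b0 i = b i) -> b0 ord_max = 0 ->
  (forall i, absv (b i) <= 1) ->
  absv (\prod_i b i ^+ e i - \prod_i b0 i ^+ e i) <= absv (b ord_max).
Proof.
move=> b0E b0_last b_le1; have [e_last0|e_last_gt0] := posnP (e ord_max).
  rewrite (_ : \prod_i b0 i ^+ e i = \prod_i b i ^+ e i) ?subrr ?absv0 ?absv_ge0 //.
  apply: eq_bigr => i _; have [->|i_neq] := eqVneq i ord_max; last by rewrite b0E.
  by rewrite e_last0 !expr0.
rewrite [X in _ - X](bigD1 ord_max) //= b0_last expr0n gtn_eqF // mul0r subr0.
rewrite (absv_prod habs) (bigD1 ord_max) //= (absvX habs).
rewrite -[leRHS]mulr1 ler_pM ?exprn_ge0 ?ler_iXnr ?(absv_ge0 habs) //.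
  by apply: prodr_ge0 => i _; exact: absv_ge0.
apply: prodr_ile1 => i _; rewrite (absvX habs) exprn_ge0 ?(absv_ge0 habs) //=.
by rewrite exprn_ile1 ?(absv_ge0 habs).
Qed.

Definition coef_max F : R :=
  \big[Num.max/0]_(m <- mpoly.msupp F) absv (mpoly.mcoeff m F).

Lemma absv_meval_sub_le F (b b0 : 'I_N.+1 -> K) :
  (forall i, i != ord_max -> b0 i = b i) -> b0 ord_max = 0 ->
  (forall i, absv (b i) <= 1) ->
  absv (mpoly.meval b F - mpoly.meval b0 F) <= coef_max F * absv (b ord_max).
Proof.
move=> b0E b0_last b_le1; rewrite !mpoly.mevalE -sumrB.
under eq_bigr => m _ do rewrite -mulrBr.
by apply: (absv_sum_mul_le habs) => [|m]; rewrite ?absv_monomial_sub_le ?(absv_ge0 habs).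
Qed.

(* Restricted to the hyperplane [x_N = 0], a form of [Div^*] is a monomial in
   [x_0, ..., x_{N-1}], hence has absolute value 1 at normalized points. *)
Lemma depth_bounded_zeroset F :
  Div_star F -> depth_bounded (zeroset F).
Proof.
case=> _ [ex F_last]; exists (logp (coef_max F)) => b Fb nb.
set s := absv (b ord_max).
have logp1 : logp (1 : R) = 0 by rewrite /logp lexx.
have [s_ge1|s_lt1] := leP 1 s.
  apply: le_trans (logp_ge0 _); rewrite -logp1 ler_logp //.
  by rewrite invf_le1 ?(lt_le_trans ltr01).
pose b0 j := if j == ord_max then 0 else b j.
have b0_last : b0 ord_max = 0 by rewrite /b0 eqxx.
have b0E i : i != ord_max -> b0 i = b i by rewrite /b0 => /negPf ->.
have b_le1 i : absv (b i) <= 1.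
  by have [->|/nb ->] := eqVneq i ord_max; rewrite ?(ltW s_lt1).
have Fb0 : absv (mpoly.meval b0 F) = 1.
  rewrite F_last // (absv_prod habs); apply: big1 => i _.
  by rewrite (absvX habs) b0E ?nb ?expr1n ?widen_ord_neq_max.
have Cs_ge1 : 1 <= coef_max F * s.
  have := absv_meval_sub_le F b0E b0_last b_le1.
  by rewrite Fb sub0r (absvN habs) Fb0.
have s_gt0 : 0 < s.
  by rewrite lt0r (absv_ge0 habs) andbT; apply: contraTneq Cs_ge1 => ->; rewrite mulr0 ler10.
by rewrite /depth ler_logp // -div1r ler_pdivrMr.
Qed.
End Depth.

Section PolynomialMap.
Variables (R : realType) (K : fieldType) (absv : K -> R).
Hypothesis habs : nonarch_absval absv.
Variables (N d : nat) (a : 'I_N -> mindex N d -> K).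
Hypothesis N_gt0 : (0 < N)%N.
Hypothesis d_gt0 : (0 < d)%N.
Implicit Types (x : 'I_N.+1 -> K) (Z : set ('I_N.+1 -> K)).

Local Notation wid := (widen_ord (leqnSn N)).
Local Notation B := (Bv absv a).

Definition coef_radius : R :=
  Num.max 1 (\big[Num.max/0]_(i < N) \big[Num.max/0]_(I in @Ind_star N d)
               absv (a i I) `^ ((I ord_max : nat)%:R)^-1).
Local Notation M := coef_radius.

Lemma coef_radius_ge1 : 1 <= M. Proof. by rewrite le_max lexx. Qed.

Lemma Bv_lnE : B = ln M. Proof. exact: logpE. Qed.

Lemma Bv_ge0 : 0 <= B. Proof. by rewrite Bv_lnE ln_ge0 // coef_radius_ge1. Qed.

Lemma Ind_starP (I : mindex N d) : I \in @Ind_star N d ->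
  [/\ (0 < I ord_max)%N, (I ord_max < d)%N &
      (\sum_(k < N) (I (wid k) : nat) = d - I ord_max)%N].
Proof.
rewrite inE => /andP [/eqP sumI /andP [I_gt0 I_lt]]; split => //.
move: sumI; rewrite big_ord_recr /= => sumI.
by apply/eqP; rewrite -(eqn_add2r (I ord_max)) subnK ?(ltnW I_lt) // sumI.
Qed.

Lemma absv_coef_le i I : I \in @Ind_star N d -> absv (a i I) <= M ^+ I ord_max.
Proof.
move=> IS; have [I_gt0 _ _] := Ind_starP IS; set k := (I ord_max : nat).
have root_le : absv (a i I) `^ k%:R^-1 <= M.
  rewrite le_max; apply/orP; right; apply: le_trans (le_bigmax _ _ i).
  exact: (le_bigmax_cond _ (fun J : mindex N d => absv (a i J) `^ ((J ord_max : nat)%:R)^-1) IS).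
have -> : absv (a i I) = (absv (a i I) `^ k%:R^-1) ^+ k.
  rewrite -powR_mulrn ?powR_ge0 // -powRrM mulVf ?powRr1 ?(absv_ge0 habs) //.
  by rewrite pnatr_eq0 -lt0n.
by rewrite lerXn2r // nnegrE ?powR_ge0 // (le_trans ler01 coef_radius_ge1).
Qed.

Definition tail i x : K :=
  \sum_(I in @Ind_star N d) a i I * \prod_(k < N.+1) x k ^+ (I k : nat).

Lemma polyf_ord_max x : polyf a x ord_max = x ord_max ^+ d.
Proof. by rewrite /polyf unlift_none. Qed.

Lemma polyf_widen x i : polyf a x (wid i) = x (wid i) ^+ d + tail i x.
Proof.
have -> : wid i = lift ord_max i by apply: val_inj; rewrite /= /bump leqNgt ltn_ord.
by rewrite /polyf liftK.
Qed.

Lemma absv_term_le x rho i I : I \in @Ind_star N d ->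
  (forall j, absv (x (wid j)) <= rho) ->
  absv (a i I * \prod_(k < N.+1) x k ^+ (I k : nat)) <=
    rho ^+ (d - I ord_max) * (M * absv (x ord_max)) ^+ I ord_max.
Proof.
move=> IS x_le; have [_ _ sumI] := Ind_starP IS.
rewrite big_ord_recr /= !(absvM habs) exprMn mulrCA.
rewrite ler_pM ?mulr_ge0 ?(absv_ge0 habs) //; last first.
  by rewrite (absvX habs) ler_pM ?absv_coef_le ?exprn_ge0 ?(absv_ge0 habs).
rewrite -sumI -prodrXr (absv_prod habs); apply: ler_prod => k _.
rewrite (absvX habs) exprn_ge0 ?(absv_ge0 habs) //=.
by rewrite lerXn2r ?nnegrE ?(absv_ge0 habs) ?x_le ?(le_trans (absv_ge0 habs _) (x_le k)).
Qed.

Lemma absv_tail_le x rho i : (forall j, absv (x (wid j)) <= rho) ->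
  M * absv (x ord_max) <= rho -> absv (tail i x) <= rho ^+ d.
Proof.
move=> x_le Ms_le; have Ms_ge0 : 0 <= M * absv (x ord_max).
  by rewrite mulr_ge0 ?(absv_ge0 habs) ?(le_trans ler01 coef_radius_ge1).
have rho_ge0 := le_trans Ms_ge0 Ms_le.
apply: (absv_sum_le habs) => [|I IS]; first exact: exprn_ge0.
apply: le_trans (absv_term_le i IS x_le) _; have [_ k_lt _] := Ind_starP IS.
have -> : rho ^+ d = rho ^+ (d - I ord_max) * rho ^+ I ord_max.
  by rewrite -exprD subnK // ltnW.
rewrite ler_wpM2l ?exprn_ge0 //.
by rewrite lerXn2r ?nnegrE.
Qed.

Lemma absv_tail_lt x rho i : (forall j, absv (x (wid j)) <= rho) ->
  M * absv (x ord_max) < rho -> absv (tail i x) < rho ^+ d.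
Proof.
move=> x_le Ms_lt; have Ms_ge0 : 0 <= M * absv (x ord_max).
  by rewrite mulr_ge0 ?(absv_ge0 habs) ?(le_trans ler01 coef_radius_ge1).
have rho_gt0 := le_lt_trans Ms_ge0 Ms_lt.
apply: (absv_sum_lt habs) => [|I IS]; first exact: exprn_gt0.
apply: le_lt_trans (absv_term_le i IS x_le) _; have [k_gt0 k_lt _] := Ind_starP IS.
have -> : rho ^+ d = rho ^+ (d - I ord_max) * rho ^+ I ord_max.
  by rewrite -exprD subnK // ltnW.
rewrite ltr_pM2l ?exprn_gt0 //.
by rewrite ltr_pXn2r -?lt0n ?nnegrE ?(ltW rho_gt0).
Qed.

Lemma depth_polyf x : depth absv (polyf a x) = depth absv x *+ d.
Proof.
rewrite /depth polyf_ord_max (absvX habs) -exprVn logpXn //.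
by rewrite invr_ge0 (absv_ge0 habs).
Qed.

Lemma normalized_widenP x :
  normalized absv x <-> forall j, absv (x (wid j)) = 1.
Proof.
split=> [nx j|x1 i i_neq]; first by rewrite nx ?widen_ord_neq_max.
have i_lt : (i < N)%N.
  by rewrite ltn_neqAle -ltnS ltn_ord andbT; apply: contra i_neq => /eqP i_N; apply/eqP/val_inj.
by have -> : i = wid (Ordinal i_lt) by exact: val_inj.
Qed.

Lemma normalized_polyf x :
  normalized absv x -> M * absv (x ord_max) < 1 -> normalized absv (polyf a x).
Proof.
move=> /normalized_widenP x1 Ms_lt1; apply/normalized_widenP => j.
have x_le j' : absv (x (wid j')) <= 1 by rewrite x1.
rewrite polyf_widen (absvDl habs) (absvX habs) x1 ?expr1n //.
by rewrite -(expr1n _ d); exact: absv_tail_lt.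
Qed.

(* A normalized image point forces either [|x_N|] to be comparatively large, or
   [x] itself to be normalized: once [M |x_N|] is below the largest [|x_j|], the
   terms [x_j ^+ d] dominate all the [tail]s. *)
Lemma normalized_of_polyf x : normalized absv (polyf a x) ->
  normalized absv x \/ 1 <= M * absv (x ord_max).
Proof.
move=> /normalized_widenP fx1; set s := absv (x ord_max).
have [jm _ jm_max] := @arg_maxP _ _ _ (Ordinal N_gt0) predT (fun j => absv (x (wid j))) isT.
set r := absv (x (wid jm)) in jm_max; have x_le j : absv (x (wid j)) <= r := jm_max j isT.
have r_ge0 : 0 <= r := absv_ge0 habs _.
have fxE j : 1 = absv (x (wid j) ^+ d + tail j x) by rewrite -polyf_widen fx1.
have [r_le|r_gt] := leP r (M * s).
  right; rewrite -(expr_ge1 d_gt0) ?(le_trans r_ge0) // (fxE jm).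
  apply: le_trans (absvD_le_max habs _ _) _; rewrite ge_max (absvX habs).
  rewrite lerXn2r ?nnegrE ?(le_trans r_ge0) //=.
  by apply: absv_tail_le => // j; exact: le_trans (x_le j) r_le.
left; have tail_lt j : absv (tail j x) < r ^+ d := absv_tail_lt j x_le r_gt.
have r1 : r = 1.
  apply/eqP; rewrite -(pexpr_eq1 d_gt0 r_ge0) eq_sym; apply/eqP.
  by rewrite (fxE jm) (absvDl habs) ?(absvX habs).
apply/normalized_widenP => j; apply/eqP; rewrite eq_le -{1}r1 x_le /=.
rewrite -(expr_ge1 d_gt0) ?(absv_ge0 habs) // -(absvX habs).
have := absvD_le_max habs (x (wid j) ^+ d) (tail j x); rewrite -fxE le_max.
by case/orP=> // tail_ge1; have := tail_lt j; rewrite r1 expr1n ltNge tail_ge1.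
Qed.

Lemma depth_le_Bv x : 1 <= M * absv (x ord_max) -> depth absv x <= B.
Proof.
move=> Ms_ge1; have s_gt0 : 0 < absv (x ord_max).
  by rewrite lt0r (absv_ge0 habs) andbT; apply: contraTneq Ms_ge1 => ->; rewrite mulr0 ler10.
rewrite Bv_lnE -(max_idPr coef_radius_ge1) -logpE /depth ler_logp //.
by rewrite -div1r ler_pdivrMr // mulrC.
Qed.

Lemma depth_polyf_le Z L x :
  (forall b, Z b -> normalized absv b -> depth absv b <= L) ->
  Z x -> normalized absv (polyf a x) -> depth absv (polyf a x) <= Num.max L B *+ d.
Proof.
move=> L_ub Zx nfx; rewrite depth_polyf lerMn2r le_max.
by case: (normalized_of_polyf nfx) => [/(L_ub _ Zx) ->|/depth_le_Bv ->]; rewrite ?orbT.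
Qed.

Lemma depth_bounded_push Z : depth_bounded absv Z -> depth_bounded absv (push a Z).
Proof.
by move=> [L L_ub]; exists (Num.max L B *+ d) => _ [x Zx <-]; exact: depth_polyf_le L_ub Zx.
Qed.

Lemma depth_bounded_iter n Z :
  depth_bounded absv Z -> depth_bounded absv (iter n (push a) Z).
Proof. by move=> Z_bdd; elim: n => //= n; exact: depth_bounded_push. Qed.

Lemma lambdav_push_le Z : depth_bounded absv Z ->
  lambdav absv (push a Z) <= d%:R * Num.max (lambdav absv Z) B.
Proof.
move=> Z_bdd; apply: lambdav_le => [|_ [x Zx <-] nfx].
  by rewrite mulr_ge0 // le_max lambdav_ge0.
by rewrite mulr_natl; apply: depth_polyf_le Zx nfx => b; exact: depth_le_lambdav.
Qed.

Lemma lambdav_push_ge Z : depth_bounded absv Z -> B < lambdav absv Z ->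
  d%:R * lambdav absv Z <= lambdav absv (push a Z).
Proof.
move=> Z_bdd B_lt; have d_posR : (0 : R) < d%:R by rewrite ltr0n.
suff : lambdav absv Z <= Num.max B (lambdav absv (push a Z) / d%:R).
  by rewrite le_max leNgt B_lt /= ler_pdivlMr // mulrC.
apply: lambdav_le => [|b Zb nb]; first by rewrite le_max Bv_ge0.
have [|B_lt_depth] := leP (depth absv b) B; first by rewrite le_max => ->.
have Ms_lt1 : M * absv (b ord_max) < 1.
  by rewrite ltNge; apply: contraTN B_lt_depth => /depth_le_Bv; rewrite -leNgt.
rewrite le_max ler_pdivlMr // mulr_natr -depth_polyf orbC depth_le_lambdav //.
- exact: depth_bounded_push.
- by exists b.
- exact: normalized_polyf.
Qed.

End PolynomialMap.

Lemma finite_range_ub (T : Type) (R : realType) (u : nat -> T) (h : T -> R) :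
  finite_set (range u) -> exists M, forall n, h (u n) <= M.
Proof.
move=> u_fin.
exists (\big[Num.max/0]_(y <- finmap.enum_fset (fset_set (h @` range u))) y) => n.
apply: (le_bigmax_seq _ _ predT id) => //.
by rewrite in_fset_set ?mem_set //; [exists (u n) => //; exists n | exact: finite_image].
Qed.

Theorem lemma3p3 (R : realType) (K : closedFieldType) (absv : K -> R)
  (habs : nonarch_absval absv) (hnt : nontrivial_absval absv)
  (hcomp : complete_absval absv)
  (N d : nat) (hN : (1 <= N)%N) (hd : (2 <= d)%N)
  (hchar : forall p : nat, p \in [pchar K] -> (d < p)%N)
  (a : 'I_N -> mindex N d -> K) :
  [/\ (forall F : mpoly.mpoly N.+1 K, Div_star F ->
         cvgn (Gseq absv a (zeroset F))),
      (forall F : mpoly.mpoly N.+1 K, Div_star F ->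
         Gv absv a (push a (zeroset F)) = d%:R * Gv absv a (zeroset F)),
      (forall F : mpoly.mpoly N.+1 K, Div_star F ->
         preperiodic a (zeroset F) -> Gv absv a (zeroset F) = 0),
      (forall F : mpoly.mpoly N.+1 K, Div_star F ->
         Bv absv a < lambdav absv (zeroset F) ->
         Gv absv a (zeroset F) = lambdav absv (zeroset F)) &
      (forall F : mpoly.mpoly N.+1 K, Div_star F ->
         `|Gv absv a (zeroset F) - lambdav absv (zeroset F)| <= 2 * Bv absv a)].
Proof.
have d_gt0 : (0 < d)%N by apply: leq_trans hd.
have B_ge0 := Bv_ge0 absv a.
pose lam F n := lambdav absv (iter n (push a) (zeroset F)).
have lam_ge0 F n : 0 <= lam F n by exact: lambdav_ge0.
have lam_rec F : Div_star F ->
    (forall n, lam F n.+1 <= d%:R * Num.max (lam F n) (Bv absv a)) /\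
    (forall n, Bv absv a < lam F n -> d%:R * lam F n <= lam F n.+1).
  move=> /(depth_bounded_zeroset habs) DF.
  have DFn n := depth_bounded_iter habs a hN d_gt0 n DF.
  by split=> n; rewrite /lam iterS; [exact: lambdav_push_le | exact: lambdav_push_ge].
split=> F /lam_rec [lamS_le lamS_ge].
- exact: cvg_renorm hd B_ge0 (lam_ge0 F) lamS_le lamS_ge.
- rewrite /Gv (_ : Gseq absv a (push a (zeroset F)) = renorm d (fun n => lam F n.+1)).
    exact: lim_renorm_shift hd B_ge0 (lam_ge0 F) lamS_le lamS_ge.
  by apply: funext => n; rewrite /Gseq /renorm /lam iterSr.
- move=> F_pre; apply: lim_renorm_bounded hd B_ge0 (lam_ge0 F) lamS_le lamS_ge _.
  exact: finite_range_ub F_pre.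
- exact: lim_renorm_escape hd B_ge0 (lam_ge0 F) lamS_le lamS_ge.
- exact: lim_renorm_dist hd B_ge0 (lam_ge0 F) lamS_le lamS_ge.
Qed.
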